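(* Let $d\ge2$, $b:=2^d$, $N\in\mathbb{N}$, and $L:=\min\{\ell\in\{0,1,2,\dots\}:b^\ell\ge N\}$. Then $2^{-L}\le N^{-1/d}\le2\cdot2^{-L}$. For every $\ell\in\{0,1,\dots,L-2\}$ and every word $u\in\{0,\dots,b-1\}^\ell$, \[ \Bigl\lfloor\frac{N}{b^\ell}\Bigr\rfloor\le M(u)\le\Bigl\lceil\frac{N}{b^\ell}\Bigr\rceil. \] If $N>b^2$, then $M(u)\ge b$ for all words $u$ of length $L-2$.
   Context: $M(u):=\#\{1\le n\le N:x_n\in C_u\}$, where $(x_n)$ is the dyadic digital sequence and $C_u$ the dyadic cube defined as follows. For $a\in\{0,\dots,b-1\}$ write $a=\sum_{j=1}^d\varepsilon_j(a)2^{j-1}$ with $\varepsilon_j(a)\in\{0,1\}$; for $m\ge0$ write $m=\sum_{k\ge0}a_k(m)b^k$ with base-$b$ digits, all but finitely many zero. Set $x_n:=\bigl(\sum_{k\ge0}\varepsilon_1(a_k(n-1))2^{-(k+1)},\dots,\sum_{k\ge0}\varepsilon_d(a_k(n-1))2^{-(k+1)}\bigr)$, $n\ge1$. For $u=(u_0,\dots,u_{\ell-1})$, $C_u:=\prod_{j=1}^d\bigl[\sum_{k=0}^{\ell-1}\varepsilon_j(u_k)2^{-(k+1)},\sum_{k=0}^{\ell-1}\varepsilon_j(u_k)2^{-(k+1)}+2^{-\ell}\bigr)$; for $\ell=0$ the empty word gives $C_\varnothing=[0,1)^d$. *)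

From Stdlib Require Import Reals Lra Lia List Bool.
Import ListNotations.
Open Scope R_scope.

Definition base (d : nat) : nat := (2 ^ d)%nat.

Definition eps (j a : nat) : nat := ((a / 2 ^ (j - 1)) mod 2)%nat.

Definition digit (d k m : nat) : nat := ((m / base d ^ k) mod base d)%nat.

(* j-th coordinate of x_n = sum_{k>=0} eps_j(a_k(n-1)) 2^{-(k+1)}.
   Since b >= 2, a_k(n-1) = 0 for all k >= n (as b^k >= 2^k > n-1),
   so the (finitely supported) series equals its partial sum over k < n. *)
Definition x_coord (d n j : nat) : R :=
  fold_right Rplus 0
    (map (fun k => INR (eps j (digit d k (n - 1))) / 2 ^ (S k)) (seq 0 n)).

Definition corner (u : list nat) (j : nat) : R :=
  fold_right Rplus 0
    (map (fun k => INR (eps j (nth k u 0%nat)) / 2 ^ (S k)) (seq 0 (length u))).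

Definition in_cube_b (d : nat) (u : list nat) (x : nat -> R) : bool :=
  forallb (fun j =>
    andb (if Rle_dec (corner u j) (x j) then true else false)
    (if Rlt_dec (x j) (corner u j + / 2 ^ (length u)) then true else false))
  (seq 1 d).

Definition M (d N : nat) (u : list nat) : nat :=
  length (filter (fun n => in_cube_b d u (x_coord d n)) (seq 1 N)).

Definition is_word (d l : nat) (u : list nat) : Prop :=
  length u = l /\ Forall (fun a => (a < base d)%nat) u.

Definition floor_div (N q : nat) : nat := (N / q)%nat.
Definition ceil_div (N q : nat) : nat := ((N + q - 1) / q)%nat.

From Stdlib Require Import Reals Lra Lia List.
Open Scope R_scope.

(* The point x_n lies in C_u exactly when, in every coordinate j, the first
   ℓ binary digits of x_n agree with those of the corner of C_u, i.e. when the
   first ℓ base-b digits of n - 1 are u_0, ..., u_{ℓ-1} (the d binary digits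
   of a base-b digit determine it).  Hence M(u) counts the n in 1..N for which
   n - 1 is congruent mod b^ℓ to the integer with base-b digits u, and that
   count is ⌊N/b^ℓ⌋ or ⌈N/b^ℓ⌉.  The bounds on N^{-1/d} come from
   b^{L-1} < N <= b^L, i.e. 2^{d(L-1)} < N <= 2^{dL}, and the last claim from
   ⌊N/b^{L-2}⌋ >= b, since N > b^{L-1}. *)

Lemma base_gt_1 (d : nat) : (1 <= d)%nat -> (1 < base d)%nat.
Proof.
  intros hd. unfold base.
  pose proof (Nat.pow_le_mono_r 2 1 d ltac:(lia) hd). simpl in *. lia.
Qed.

Lemma base_pos (d : nat) : (0 < base d)%nat.
Proof. unfold base. apply Nat.neq_0_lt_0, Nat.pow_nonzero. lia. Qed.

Lemma base_pow_pos (d l : nat) : (0 < base d ^ l)%nat.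
Proof. apply Nat.neq_0_lt_0, Nat.pow_nonzero. pose proof (base_pos d). lia. Qed.

Definition bin_frac (e : nat -> nat) (K : nat) : R :=
  fold_right Rplus 0 (map (fun k => INR (e k) / 2 ^ S k) (seq 0 K)).

Definition is_bits (e : nat -> nat) : Prop := forall k, (e k <= 1)%nat.

Lemma fold_right_Rplus_app (l1 l2 : list R) :
  fold_right Rplus 0 (l1 ++ l2) = fold_right Rplus 0 l1 + fold_right Rplus 0 l2.
Proof. induction l1 as [|a l1 IH]; simpl; [| rewrite IH]; ring. Qed.

Lemma bin_frac_S (e : nat -> nat) (K : nat) :
  bin_frac e (S K) = bin_frac e K + INR (e K) / 2 ^ S K.
Proof. unfold bin_frac. rewrite seq_S, map_app, fold_right_Rplus_app. simpl. ring. Qed.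

Lemma bin_frac_shift (e : nat -> nat) (K : nat) :
  bin_frac e (S K) = (INR (e 0%nat) + bin_frac (fun k => e (S k)) K) / 2.
Proof.
  induction K as [|K IH].
  - unfold bin_frac. simpl. field.
  - rewrite bin_frac_S, IH, bin_frac_S. simpl. field. apply pow_nonzero. lra.
Qed.

Lemma bin_frac_zero_tail (e : nat -> nat) (K K' : nat) :
  (forall k, (K <= k)%nat -> e k = 0%nat) -> (K <= K')%nat -> bin_frac e K' = bin_frac e K.
Proof.
  intros Hzero HK. induction HK as [|K' HK IH]; [reflexivity|].
  rewrite bin_frac_S, IH, Hzero by exact HK. simpl. field. apply pow_nonzero. lra.
Qed.

Lemma bin_frac_bounds (e : nat -> nat) (K : nat) :
  is_bits e -> 0 <= bin_frac e K <= 1 - / 2 ^ K.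
Proof.
  revert e; induction K as [|K IH]; intros e He.
  - unfold bin_frac. simpl. lra.
  - rewrite bin_frac_shift.
    specialize (IH (fun k => e (S k)) (fun k => He (S k))).
    assert (Hbit : 0 <= INR (e 0%nat) <= 1) by (split; [apply pos_INR | apply (le_INR _ 1), He]).
    assert (Hhalf : / 2 ^ S K = / 2 ^ K / 2) by (simpl; field; apply pow_nonzero; lra).
    lra.
Qed.

Lemma bin_frac_prefix_iff (e c : nat -> nat) (l K : nat) :
  is_bits e -> is_bits c -> (l <= K)%nat ->
  (bin_frac c l <= bin_frac e K < bin_frac c l + / 2 ^ l <->
   forall k, (k < l)%nat -> e k = c k).
Proof.
  revert e c K; induction l as [|l IH]; intros e c K He Hc HlK.
  - pose proof (bin_frac_bounds e K He) as Hbe.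
    assert (Hpos : 0 < / 2 ^ K) by (apply Rinv_0_lt_compat, pow_lt; lra).
    change (bin_frac c 0) with 0. rewrite pow_O, Rinv_1.
    split; intros; [lia | lra].
  - destruct K as [|K]; [lia|].
    rewrite !bin_frac_shift.
    specialize (IH (fun k => e (S k)) (fun k => c (S k)) K
                  (fun k => He (S k)) (fun k => Hc (S k)) ltac:(lia)).
    pose proof (bin_frac_bounds (fun k => e (S k)) K (fun k => He (S k))) as Hbe.
    pose proof (bin_frac_bounds (fun k => c (S k)) l (fun k => Hc (S k))) as Hbc.
    assert (Hpos : 0 < / 2 ^ K) by (apply Rinv_0_lt_compat, pow_lt; lra).
    assert (Hhalf : / 2 ^ S l = / 2 ^ l / 2) by (simpl; field; apply pow_nonzero; lra).
    split.
    + intros Hin. rewrite Hhalf in Hin.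
      (* differing leading bits would put e and c in different halves of [0, 1) *)
      assert (Hfirst : e 0%nat = c 0%nat).
      { specialize (He 0%nat). specialize (Hc 0%nat).
        destruct (e 0%nat) as [|[|]], (c 0%nat) as [|[|]]; simpl in Hin; try lia; lra. }
      assert (Htail : forall k, (k < l)%nat -> e (S k) = c (S k)).
      { apply IH. rewrite Hfirst in Hin. lra. }
      intros [|k] Hk; [exact Hfirst | apply Htail; lia].
    + intros Hall.
      assert (Htail : bin_frac (fun k => c (S k)) l <= bin_frac (fun k => e (S k)) K
                      < bin_frac (fun k => c (S k)) l + / 2 ^ l)
        by (apply IH; intros k Hk; apply Hall; lia).
      rewrite (Hall 0%nat) by lia. lra.
Qed.

Lemma eps_le_1 (j a : nat) : (eps j a <= 1)%nat.
Proof. unfold eps. pose proof (Nat.mod_upper_bound (a / 2 ^ (j - 1)) 2). lia. Qed.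

Lemma digit_lt_base (d k m : nat) : (digit d k m < base d)%nat.
Proof. apply Nat.mod_upper_bound. pose proof (base_pos d). lia. Qed.

Lemma digit_0 (d m : nat) : digit d 0 m = (m mod base d)%nat.
Proof. unfold digit. rewrite Nat.pow_0_r, Nat.div_1_r. reflexivity. Qed.

Lemma digit_S (d k m : nat) : digit d (S k) m = digit d k (m / base d).
Proof. unfold digit. rewrite Nat.pow_succ_r', Nat.Div0.div_div. reflexivity. Qed.

Lemma digit_small (d k m : nat) : (m < base d ^ k)%nat -> digit d k m = 0%nat.
Proof. intros H. unfold digit. rewrite Nat.div_small by exact H. apply Nat.Div0.mod_0_l. Qed.

Lemma eps_inj (d a a' : nat) : (a < base d)%nat -> (a' < base d)%nat ->
  (forall j, (1 <= j <= d)%nat -> eps j a = eps j a') -> a = a'.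
Proof.
  intros Ha Ha' Heps. apply Nat.bits_inj. intros i.
  assert (Hbit : ((a / 2 ^ i) mod 2 = (a' / 2 ^ i) mod 2)%nat).
  { destruct (Nat.lt_ge_cases i d) as [Hi|Hi].
    - specialize (Heps (S i) ltac:(lia)). unfold eps in Heps.
      replace (S i - 1)%nat with i in Heps by lia. exact Heps.
    - unfold base in *. pose proof (Nat.pow_le_mono_r 2 d i ltac:(lia) Hi).
      rewrite !Nat.div_small by lia. reflexivity. }
  rewrite <- !Nat.testbit_spec' in Hbit.
  destruct (Nat.testbit a i), (Nat.testbit a' i); simpl in Hbit; congruence.
Qed.

Definition word_value (d : nat) (u : list nat) : nat :=
  fold_right (fun a acc => a + base d * acc)%nat 0%nat u.

Lemma word_value_lt (d : nat) (u : list nat) :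
  Forall (fun a => (a < base d)%nat) u -> (word_value d u < base d ^ length u)%nat.
Proof. induction 1; simpl; nia. Qed.

Lemma digits_eq_iff_mod (d : nat) (u : list nat) (m : nat) :
  Forall (fun a => (a < base d)%nat) u ->
  (forall k, (k < length u)%nat -> digit d k m = nth k u 0%nat) <->
  (m mod base d ^ length u = word_value d u)%nat.
Proof.
  intros Hu. revert m. induction Hu as [|a u Ha Hu IH]; intros m.
  - simpl length. rewrite Nat.pow_0_r, Nat.mod_1_r. simpl. split; intros; [reflexivity | lia].
  - simpl length. simpl word_value. rewrite Nat.pow_succ_r', Nat.Div0.mod_mul_r.
    pose proof (digit_lt_base d 0 m) as Hm. rewrite digit_0 in Hm.
    split.
    + intros Hall.
      assert (Hlow : (m mod base d = a)%nat) by (rewrite <- digit_0; apply (Hall 0%nat); lia).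
      assert (Hhigh : ((m / base d) mod base d ^ length u = word_value d u)%nat).
      { apply IH. intros k Hk. rewrite <- digit_S. apply (Hall (S k)). lia. }
      lia.
    + intros Heq.
      assert (Hlow : (m mod base d = a)%nat).
      { apply (f_equal (fun x => x mod base d)) in Heq.
        rewrite !(Nat.mul_comm (base d)), !Nat.Div0.mod_add, Nat.Div0.mod_mod,
          (Nat.mod_small a) in Heq by lia.
        exact Heq. }
      assert (Hhigh : ((m / base d) mod base d ^ length u = word_value d u)%nat).
      { rewrite Hlow in Heq. apply (Nat.mul_cancel_l _ _ (base d)); lia. }
      intros [|k] Hk.
      * rewrite digit_0. exact Hlow.
      * rewrite digit_S. apply IH; [exact Hhigh | simpl in Hk; lia].
Qed.

Lemma in_cube_b_spec (d : nat) (u : list nat) (x : nat -> R) :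
  in_cube_b d u x = true <->
  forall j, (1 <= j <= d)%nat -> corner u j <= x j < corner u j + / 2 ^ length u.
Proof.
  unfold in_cube_b. rewrite forallb_forall.
  split; intros H j Hj; specialize (H j); rewrite in_seq in *; specialize (H ltac:(lia));
    destruct (Rle_dec (corner u j) (x j)), (Rlt_dec (x j) (corner u j + / 2 ^ length u));
    simpl in *; try discriminate; tauto.
Qed.

Lemma x_coord_bin_frac (d n j K : nat) : (1 <= d)%nat -> (n <= K)%nat ->
  x_coord d n j = bin_frac (fun k => eps j (digit d k (n - 1))) K.
Proof.
  intros hd HK. symmetry. apply bin_frac_zero_tail; [|exact HK].
  intros k Hk. rewrite digit_small.
  - unfold eps. rewrite Nat.Div0.div_0_l. reflexivity.
  - pose proof (Nat.pow_gt_lin_r (base d) n (base_gt_1 d hd)).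
    pose proof (Nat.pow_le_mono_r (base d) n k ltac:(pose proof (base_pos d); lia) Hk).
    lia.
Qed.

Lemma x_coord_in_corner_iff (d n j : nat) (u : list nat) : (1 <= d)%nat ->
  corner u j <= x_coord d n j < corner u j + / 2 ^ length u <->
  forall k, (k < length u)%nat -> eps j (digit d k (n - 1)) = eps j (nth k u 0%nat).
Proof.
  intros hd. rewrite (x_coord_bin_frac d n j (n + length u) hd) by lia.
  apply bin_frac_prefix_iff; [intros k; apply eps_le_1 .. | lia].
Qed.

Lemma in_cube_b_x_coord_iff (d n : nat) (u : list nat) :
  (1 <= d)%nat -> Forall (fun a => (a < base d)%nat) u ->
  in_cube_b d u (x_coord d n) = true <->
  ((n - 1) mod base d ^ length u = word_value d u)%nat.
Proof.
  intros hd Hu. rewrite in_cube_b_spec, <- digits_eq_iff_mod by exact Hu.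
  setoid_rewrite (x_coord_in_corner_iff d n _ u hd).
  split.
  - intros Heps k Hk. apply (eps_inj d).
    + apply digit_lt_base.
    + rewrite Forall_forall in Hu. apply Hu, nth_In, Hk.
    + intros j Hj. apply Heps; assumption.
  - intros Hdig j _ k Hk. rewrite Hdig by exact Hk. reflexivity.
Qed.

Definition residue_count (q r N : nat) : nat :=
  length (filter (fun n => Nat.eqb ((n - 1) mod q) r) (seq 1 N)).

Lemma M_eq_residue_count (d N l : nat) (u : list nat) : (1 <= d)%nat -> is_word d l u ->
  M d N u = residue_count (base d ^ l) (word_value d u) N.
Proof.
  intros hd [Hlen Hu]. subst l. unfold M, residue_count. f_equal.
  apply filter_ext. intros n.
  destruct (in_cube_b d u (x_coord d n)) eqn:Hin; symmetry.
  - apply Nat.eqb_eq, (in_cube_b_x_coord_iff d n u hd Hu), Hin.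
  - apply Nat.eqb_neq. rewrite <- (in_cube_b_x_coord_iff d n u hd Hu). congruence.
Qed.

Lemma residue_count_S (q r N : nat) :
  residue_count q r (S N) = (residue_count q r N + if Nat.eqb (N mod q) r then 1 else 0)%nat.
Proof.
  unfold residue_count. rewrite seq_S, filter_app, length_app. simpl.
  rewrite Nat.sub_0_r. destruct (Nat.eqb (N mod q) r); simpl; lia.
Qed.

Lemma residue_count_partial_block (q r a : nat) : (r < q)%nat ->
  residue_count q r (q * a) = a ->
  forall s, (s <= q)%nat -> residue_count q r (q * a + s) = (a + if Nat.ltb r s then 1 else 0)%nat.
Proof.
  intros Hr Hblock s. induction s as [|s IH]; intros Hs.
  - rewrite Nat.add_0_r, Hblock. destruct (Nat.ltb_spec r 0); lia.
  - rewrite Nat.add_succ_r, residue_count_S, IH by lia.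
    replace ((q * a + s) mod q)%nat with s
      by (rewrite Nat.add_comm, Nat.mul_comm, Nat.Div0.mod_add, Nat.mod_small; lia).
    destruct (Nat.ltb_spec r s), (Nat.eqb_spec s r), (Nat.ltb_spec r (S s)); lia.
Qed.

Lemma residue_count_full_blocks (q r a : nat) : (r < q)%nat -> residue_count q r (q * a) = a.
Proof.
  intros Hr. induction a as [|a IH]; [rewrite Nat.mul_0_r; reflexivity|].
  rewrite Nat.mul_succ_r, (residue_count_partial_block q r a Hr IH q) by lia.
  destruct (Nat.ltb_spec r q); lia.
Qed.

Lemma residue_count_bounds (q r N : nat) : (r < q)%nat ->
  (floor_div N q <= residue_count q r N <= ceil_div N q)%nat.
Proof.
  intros Hr. unfold floor_div, ceil_div.
  pose proof (Nat.mod_upper_bound N q ltac:(lia)) as Hmod.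
  pose proof (Nat.div_mod_eq N q) as HN.
  assert (Hcount : residue_count q r (q * (N / q) + N mod q)
                   = (N / q + if Nat.ltb r (N mod q) then 1 else 0)%nat).
  { apply residue_count_partial_block; [exact Hr | apply residue_count_full_blocks, Hr | lia]. }
  rewrite <- HN in Hcount. rewrite Hcount.
  destruct (Nat.ltb_spec r (N mod q)); split; try lia;
    apply Nat.div_le_lower_bound; nia.
Qed.

Lemma M_bounds (d N l : nat) (u : list nat) : (1 <= d)%nat -> is_word d l u ->
  (floor_div N (base d ^ l) <= M d N u <= ceil_div N (base d ^ l))%nat.
Proof.
  intros hd Hw. rewrite (M_eq_residue_count d N l u hd Hw).
  apply residue_count_bounds. destruct Hw as [<- Hu]. apply word_value_lt, Hu.
Qed.

Lemma Rpower_base_pow_inv (d L : nat) : (1 <= d)%nat ->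
  Rpower (INR (base d ^ L)) (/ INR d) = 2 ^ L.
Proof.
  intros hd. assert (Hd : INR d <> 0) by (apply not_0_INR; lia).
  unfold base. rewrite <- Nat.pow_mul_r, pow_INR, <- Rpower_pow by (simpl; lra).
  rewrite Rpower_mult, mult_INR, <- Rpower_pow by lra.
  f_equal. field. exact Hd.
Qed.

Lemma Rpower_neg_inv_bounds (d N L : nat) : (1 <= d)%nat -> (1 <= N)%nat ->
  (base d ^ Nat.pred L <= N <= base d ^ L)%nat ->
  / 2 ^ L <= Rpower (INR N) (- / INR d) <= 2 * / 2 ^ L.
Proof.
  intros hd hN [Hlo Hhi].
  assert (HNpos : 0 < INR N) by (apply lt_0_INR; lia).
  assert (Hexp : 0 <= / INR d) by (apply Rlt_le, Rinv_0_lt_compat, lt_0_INR; lia).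
  assert (Hroot_hi : Rpower (INR N) (/ INR d) <= 2 ^ L).
  { rewrite <- (Rpower_base_pow_inv d L hd). apply Rle_Rpower_l; [exact Hexp|].
    split; [exact HNpos | apply le_INR, Hhi]. }
  assert (Hroot_lo : 2 ^ Nat.pred L <= Rpower (INR N) (/ INR d)).
  { rewrite <- (Rpower_base_pow_inv d (Nat.pred L) hd). apply Rle_Rpower_l; [exact Hexp|].
    split; [apply lt_0_INR, base_pow_pos | apply le_INR, Hlo]. }
  assert (Hpred_pos : 0 < 2 ^ Nat.pred L) by (apply pow_lt; lra).
  rewrite Rpower_Ropp. split.
  - apply Rinv_le_contravar; [lra | exact Hroot_hi].
  - apply Rle_trans with (/ 2 ^ Nat.pred L); [apply Rinv_le_contravar; lra|].
    destruct L as [|L]; simpl; [lra | right; field; apply pow_nonzero; lra].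
Qed.

Lemma base_pow_lt_of_minimal (d N L l : nat) :
  (forall l', (N <= base d ^ l')%nat -> (L <= l')%nat) -> (l < L)%nat -> (base d ^ l < N)%nat.
Proof.
  intros Hmin Hl. destruct (Nat.lt_ge_cases (base d ^ l) N) as [H|H]; [exact H|].
  specialize (Hmin l H). lia.
Qed.

Theorem lemma2p6 (d N L : nat)
  (hd : (2 <= d)%nat) (hN : (1 <= N)%nat)
  (hL : (N <= base d ^ L)%nat /\ (forall l : nat, (N <= base d ^ l)%nat -> (L <= l)%nat)) :
  (/ 2 ^ L <= Rpower (INR N) (- / INR d) <= 2 * / 2 ^ L) /\
  (forall (l : nat) (u : list nat), (l + 2 <= L)%nat -> is_word d l u ->
     (floor_div N (base d ^ l) <= M d N u <= ceil_div N (base d ^ l))%nat) /\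
  ((base d ^ 2 < N)%nat -> forall u : list nat, is_word d (L - 2) u ->
     (base d <= M d N u)%nat).
Proof.
  destruct hL as [HNL Hmin].
  split; [|split].
  - apply Rpower_neg_inv_bounds; [lia | exact hN | split; [|exact HNL]].
    destruct L as [|L]; [simpl; exact hN|].
    apply Nat.lt_le_incl, (base_pow_lt_of_minimal d N (S L)); [exact Hmin | lia].
  - intros l u _ Hw. apply M_bounds; [lia | exact Hw].
  - intros Hbig u Hw.
    assert (HL : (3 <= L)%nat).
    { destruct (Nat.le_gt_cases 3 L) as [H|H]; [exact H|].
      pose proof (Nat.pow_le_mono_r (base d) L 2 ltac:(pose proof (base_pos d); lia) ltac:(lia)).
      lia. }
    assert (Hprev : (base d ^ (L - 2) * base d < N)%nat).
    { rewrite Nat.mul_comm, <- Nat.pow_succ_r'.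
      replace (S (L - 2)) with (L - 1)%nat by lia.
      apply (base_pow_lt_of_minimal d N L); [exact Hmin | lia]. }
    apply Nat.le_trans with (floor_div N (base d ^ (L - 2))).
    + apply Nat.div_le_lower_bound; [pose proof (base_pow_pos d (L - 2)); lia | nia].
    + apply M_bounds; [lia | exact Hw].
Qed.
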